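(* Let $A\in\mathcal S_n^+$ with $\operatorname{rk}(A)=\operatorname{st}_+(A)=r$, and suppose $A=BCB^T$ where $B\in\mathbb R_+^{n\times r}$, $C\in\mathbb R_+^{r\times r}$ is symmetric, and at least one of $B$, $C$ is entrywise positive. Then $A\notin\partial\mathcal E_n$.
   Context: $\mathcal S_n^+$ is the set of $n\times n$ symmetric entrywise nonnegative real matrices; $\mathbb R_+^{p\times q}$ the entrywise nonnegative $p\times q$ real matrices. The SNT-rank $\operatorname{st}_+(A)$ of $A\in\mathcal S_n^+$ is the minimal $k$ such that $A=BCB^T$ with $B\in\mathbb R_+^{n\times k}$ and $C\in\mathcal S_k^+$. $\mathcal E_n=\{A\in\mathcal S_n^+:\operatorname{rk}(A)=\operatorname{st}_+(A)\}$. $\partial\mathcal E_n$ is the set of $A\in\mathcal E_n$ such that $A-\alpha uu^T\notin\mathcal E_n$ for every $\alpha>0$, where $u$ is the Perron eigenvector of $A$ (an entrywise nonnegative unit eigenvector for the spectral radius of $A$). *)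

From mathcomp Require Import all_boot all_order all_algebra.
From mathcomp Require Import reals.
Set Implicit Arguments. Unset Strict Implicit. Unset Printing Implicit Defensive.
Import Order.TTheory GRing.Theory Num.Theory.
Local Open Scope ring_scope.

Section Defs.
Variable R : realType.

Definition nonneg_mx p q (M : 'M[R]_(p, q)) : Prop := forall i j, 0 <= M i j.
Definition pos_mx p q (M : 'M[R]_(p, q)) : Prop := forall i j, 0 < M i j.
Definition SNN n (A : 'M[R]_n) : Prop := A^T = A /\ nonneg_mx A.

Definition snt_fact n (A : 'M[R]_n) (k : nat) : Prop :=
  exists (B : 'M[R]_(n, k)) (C : 'M[R]_k),
    nonneg_mx B /\ SNN C /\ A = B *m C *m B^T.

Definition is_st_plus n (A : 'M[R]_n) (k : nat) : Prop :=
  snt_fact A k /\ forall m, snt_fact A m -> (k <= m)%N.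

Definition in_E n (A : 'M[R]_n) : Prop := SNN A /\ is_st_plus A (\rank A).

(* spectral radius: largest absolute value of an eigenvalue, which is itself
   attained as an eigenvalue (for symmetric real matrices all eigenvalues are real) *)
Definition is_spectral_radius n (A : 'M[R]_n) (rho : R) : Prop :=
  eigenvalue A rho /\ forall l, eigenvalue A l -> `|l| <= rho.

Definition perron_vec n (A : 'M[R]_n) (u : 'cV[R]_n) : Prop :=
  nonneg_mx u /\ \sum_i (u i 0) ^+ 2 = 1 /\
  exists rho, is_spectral_radius A rho /\ A *m u = rho *: u.

Definition in_bdE n (A : 'M[R]_n) : Prop :=
  in_E A /\ forall u : 'cV[R]_n, perron_vec A u ->
    forall alpha : R, 0 < alpha -> ~ in_E (A - alpha *: (u *m u^T)).

End Defs.

(* Proof.  (1) Perron-Frobenius for symmetric nonnegative A != 0, proved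
   variationally: a maximizer x of x A x^T on the unit sphere exists by
   compactness, |x| is again a maximizer, and a maximizer u is an eigenvector
   since it is isotropic for the positive semidefinite form rho I - A.  This
   yields a Perron vector c with A c = rho c, rho > 0.
   (2) For 0 < alpha != rho the deflation A - alpha c c^T has rank >= rk A, so any
   SNT factorization of it of size rk A puts it in E_n, contradicting that A is
   on the boundary.
   (3) Such a factorization exists for small alpha: with y = B^T c / rho we have
   B C y = c; if B > 0, then (B - s c y^T) C (B - s c y^T)^T = A - alpha c c^T
   with B - s c y^T still nonnegative for small s; if C > 0, then
   B (C - alpha w w^T) B^T = A - alpha c c^T with w = C y and C - alpha w w^T
   still nonnegative for small alpha. *)

From mathcomp Require Import all_boot all_order all_algebra.
From mathcomp Require Import reals.
From mathcomp Require Import boolp classical_sets topology normedtype derive.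
From mathcomp Require Import ring lra.
Import Order.TTheory GRing.Theory Num.Theory.
Import numFieldNormedType.Exports.
Set Implicit Arguments. Unset Strict Implicit. Unset Printing Implicit Defensive.
Local Open Scope ring_scope.

Section PerronVector.
Variable R : realType.

Definition bform n (M : 'M[R]_n) (x y : 'rV[R]_n) : R := (x *m M *m y^T) 0 0.
Definition sqnorm n (x : 'rV[R]_n) : R := \sum_i x 0 i ^+ 2.

Lemma bformE n (M : 'M[R]_n) x y :
  bform M x y = \sum_i \sum_j x 0 i * M i j * y 0 j.
Proof.
rewrite /bform mxE; under eq_bigr do rewrite !mxE big_distrl /=.
by rewrite exchange_big.
Qed.

Lemma bform_sym n (M : 'M[R]_n) : M^T = M -> forall x y, bform M x y = bform M y x.
Proof.
move=> sM x y; rewrite !bformE exchange_big.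
by apply: eq_bigr => i _; apply: eq_bigr => j _; rewrite -{1}sM mxE; ring.
Qed.

Lemma bform_shift n (M : 'M[R]_n) x y t :
  bform M (x + t *: y) (x + t *: y) =
  bform M x x + t * bform M x y + t * bform M y x + t ^+ 2 * bform M y y.
Proof.
rewrite !bformE !mulr_sumr -!big_split /=; apply: eq_bigr => i _.
by rewrite !mulr_sumr -!big_split /=; apply: eq_bigr => j _; rewrite !mxE; ring.
Qed.

Lemma bformZ n (M : 'M[R]_n) a x : bform M (a *: x) (a *: x) = a ^+ 2 * bform M x x.
Proof.
rewrite !bformE mulr_sumr; apply: eq_bigr => i _.
by rewrite mulr_sumr; apply: eq_bigr => j _; rewrite !mxE; ring.
Qed.

Lemma bform_scalar_sub n (M : 'M[R]_n) a x :
  bform (a%:M - M) x x = a * sqnorm x - bform M x x.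
Proof.
rewrite /bform mulmxBr mulmxBl mxE [X in _ + X]mxE; congr (_ - _).
rewrite mul_mx_scalar -scalemxAl !mxE mulr_sumr /sqnorm mulr_sumr.
by apply: eq_bigr => i _; rewrite mxE expr2.
Qed.

Lemma sqnorm_ge0 n (x : 'rV[R]_n) : 0 <= sqnorm x.
Proof. by apply: sumr_ge0 => i _; rewrite sqr_ge0. Qed.

Lemma sqnorm0 n : sqnorm (0 : 'rV[R]_n) = 0.
Proof. by rewrite /sqnorm big1 // => i _; rewrite mxE expr0n. Qed.

Lemma sqnorm_eq0 n (x : 'rV[R]_n) : sqnorm x = 0 -> x = 0.
Proof.
move/eqP; rewrite psumr_eq0; last by move=> i _; rewrite sqr_ge0.
move/allP => x0; apply/matrixP => i j; rewrite (ord1 i) mxE.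
by move: (x0 j (mem_index_enum _)); rewrite /= sqrf_eq0 => /eqP.
Qed.

Lemma linear_coef_eq0 (a b : R) :
  0 <= a -> (forall t, 0 < t -> a * t + b * t ^+ 2 <= 0) -> a = 0.
Proof.
move=> a_ge0 dom; apply/eqP; rewrite eq_le a_ge0 andbT; apply/negP => /negP.
rewrite -ltNge => a_gt0; set k := `|b| + 1.
have k_gt0 : 0 < k by rewrite /k ltr_wpDl.
have := lerNnormlW (lexx `|b|); set t := a / (2 * k).
have t_gt0 : 0 < t by rewrite divr_gt0 // mulr_gt0.
have tk : t * (2 * k) = a by rewrite /t mulfVK // mulf_neq0 // gt_eqF.
have := dom t t_gt0; rewrite /k in tk k_gt0; nra.
Qed.

(* A vector isotropic for a positive semidefinite symmetric form lies in its
   kernel: the first-order term of the form at u - t uM must vanish. *)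
Lemma psd_isotropic_kernel n (M : 'M[R]_n) (u : 'rV[R]_n) :
  M^T = M -> (forall y, 0 <= bform M y y) -> bform M u u = 0 -> u *m M = 0.
Proof.
move=> sM psd uu0; set z := u *m M.
have uz : bform M u z = sqnorm z.
  by rewrite /bform mxE /sqnorm; apply: eq_bigr => i _; rewrite [_^T _ _]mxE expr2.
suff : 2 * sqnorm z = 0 by move/eqP; rewrite mulf_eq0 pnatr_eq0 => /eqP/sqnorm_eq0.
apply: (linear_coef_eq0 (b := - bform M z z)).
  by rewrite mulr_ge0 ?sqnorm_ge0.
move=> t _; have := psd (u + (- t) *: z).
by rewrite bform_shift uu0 (bform_sym sM z u) uz sqrrN; lra.
Qed.

Lemma continuous_sum n (I : finType) (h : I -> 'rV[R]_n -> R) :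
  (forall i, continuous (h i)) -> continuous (fun x => \sum_i h i x).
Proof. by move=> ch; apply: continuous_big => //; exact: add_continuous. Qed.

Lemma bform_continuous n (M : 'M[R]_n) : continuous (fun x => bform M x x).
Proof.
have -> : (fun x : 'rV[R]_n => bform M x x) =
    fun x => \sum_i \sum_j x 0 i * M i j * x 0 j.
  by apply: funext => x; rewrite bformE.
apply: continuous_sum => i; apply: continuous_sum => j x.
exact: (continuousM (continuousM (@coord_continuous R 1 n 0 i x)
  (@cst_continuous _ _ (M i j) x)) (@coord_continuous R 1 n 0 j x)).
Qed.

Lemma sqnorm_continuous n : continuous (@sqnorm n).
Proof.
apply: continuous_sum => i x.
have -> : (fun y : 'rV[R]_n => y 0 i ^+ 2) = fun y => y 0 i * y 0 i.
  by apply: funext => y; rewrite expr2.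
exact: (continuousM (@coord_continuous R 1 n 0 i x) (@coord_continuous R 1 n 0 i x)).
Qed.

(* Extreme value theorem on the unit sphere, which is compact and, as soon as
   there is a coordinate i0, nonempty. *)
Lemma sphere_max n (f : 'rV[R]_n -> R) (i0 : 'I_n) : continuous f ->
  exists x, sqnorm x = 1 /\ forall y, sqnorm y = 1 -> f y <= f x.
Proof.
move=> cf; set S := [set x : 'rV[R]_n | sqnorm x = 1]%classic.
have S_neq0 : (S !=set0)%classic.
  exists (\row_j (j == i0)%:R); rewrite /S /= /sqnorm (bigD1 i0) //= big1.
    by rewrite mxE eqxx expr1n addr0.
  by move=> j /negbTE ji; rewrite mxE ji expr0n.
have coord_le1 (x : 'rV[R]_n) (i : 'I_n) : S x -> `|x 0 i| <= 1.
  move=> Sx; have : x 0 i ^+ 2 <= 1.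
    rewrite -Sx /sqnorm (bigD1 i) //= lerDl.
    by apply: sumr_ge0 => *; exact: sqr_ge0.
  by move=> x2_le1; rewrite ler_norml; apply/andP; split; nra.
have S_compact : compact S.
  apply: bounded_closed_compact.
    exists 1; split => // a a_gt1 x /= Sx.
    rewrite [leLHS]/Num.Def.normr /= mx_normrE; apply/bigmax_leP.
    split; first by rewrite ltW // (lt_trans ltr01).
    by move=> [i j] _ /=; rewrite (ord1 i); exact: le_trans (coord_le1 _ _ Sx) (ltW a_gt1).
  apply: (@preimage_closed _ _ (@sqnorm n) [set 1]%classic); last exact: closed_eq.
  by move=> x _; exact: sqnorm_continuous.
have [c Sc c_max] := EVT_max_rV S_neq0 S_compact (continuous_subspaceT cf).
exists c; split; first by move: Sc; rewrite inE.
by move=> y Sy; apply: c_max; rewrite inE.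
Qed.

Lemma sqnormE n (x : 'rV[R]_n) : sqnorm x = (x *m x^T) 0 0.
Proof. by rewrite mxE; apply: eq_bigr => i _; rewrite mxE expr2. Qed.

Lemma sqnormZ n a (x : 'rV[R]_n) : sqnorm (a *: x) = a ^+ 2 * sqnorm x.
Proof. by rewrite /sqnorm mulr_sumr; apply: eq_bigr => i _; rewrite mxE exprMn. Qed.

Lemma sqnorm_abs n (x : 'rV[R]_n) : sqnorm (map_mx Num.norm x) = sqnorm x.
Proof. by apply: eq_bigr => i _; rewrite mxE real_normK ?num_real. Qed.

Lemma bform_abs n (M : 'M[R]_n) (x : 'rV[R]_n) : nonneg_mx M ->
  `|bform M x x| <= bform M (map_mx Num.norm x) (map_mx Num.norm x).
Proof.
move=> nM; rewrite !bformE; apply: le_trans (ler_norm_sum _ _ _) _.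
apply: ler_sum => i _; apply: le_trans (ler_norm_sum _ _ _) _.
by apply: ler_sum => j _; rewrite !mxE !normrM (ger0_norm (nM i j)).
Qed.

Lemma rayleigh_bound n (M : 'M[R]_n) (x : 'rV[R]_n) :
  (forall y, sqnorm y = 1 -> bform M y y <= bform M x x) ->
  forall y, bform M y y <= bform M x x * sqnorm y.
Proof.
move=> x_max y; have [/sqnorm_eq0 -> | y_neq0] := eqVneq (sqnorm y) 0.
  by rewrite /bform !mul0mx mxE sqnorm0 mulr0.
have y_gt0 : 0 < sqnorm y by rewrite lt0r y_neq0 sqnorm_ge0.
set a := (Num.sqrt (sqnorm y))^-1.
have a2 : a ^+ 2 = (sqnorm y)^-1 by rewrite /a exprVn sqr_sqrtr // ltW.
have := x_max (a *: y); rewrite sqnormZ bformZ a2 mulVf // => /(_ erefl).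
by rewrite -ler_pdivrMr // mulrC.
Qed.

Lemma bform_const1_gt0 n (M : 'M[R]_n) i j : nonneg_mx M -> 0 < M i j ->
  0 < bform M (const_mx 1) (const_mx 1).
Proof.
move=> nM Mij_gt0; rewrite bformE (bigD1 i) //= (bigD1 j) //= !mxE mul1r mulr1.
set rest_j := \sum_(k | _) _; set rest_i := \sum_(k | _) _.
have : 0 <= rest_j by apply: sumr_ge0 => k _; rewrite !mxE mul1r mulr1.
have : 0 <= rest_i.
  by apply: sumr_ge0 => k _; apply: sumr_ge0 => l _; rewrite !mxE mul1r mulr1.
lra.
Qed.

Lemma eigenvalue_norm_le n (M : 'M[R]_n) rho l : nonneg_mx M ->
  (forall y, bform M y y <= rho * sqnorm y) -> eigenvalue M l -> `|l| <= rho.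
Proof.
move=> nM bound /eigenvalueP [v vM v_neq0].
have vv : bform M v v = l * sqnorm v.
  by rewrite /bform vM -scalemxAl mxE sqnormE.
have v_gt0 : 0 < sqnorm v.
  by rewrite lt0r sqnorm_ge0 andbT; apply: contra v_neq0 => /eqP/sqnorm_eq0 ->.
have : `|l| * sqnorm v <= rho * sqnorm v.
  rewrite -(ger0_norm (ltW v_gt0)) -normrM -vv (ger0_norm (ltW v_gt0)).
  by rewrite -(sqnorm_abs v); exact: le_trans (bform_abs _ nM) (bound _).
by rewrite ler_pM2r.
Qed.

(* Perron-Frobenius for symmetric nonnegative matrices: the maximum rho of the
   form on the unit sphere is a positive eigenvalue dominating all others, with
   a nonnegative unit eigenvector (the absolute value of a maximizer). *)
Lemma perron_eigenvector n (A : 'M[R]_n) :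
  A^T = A -> nonneg_mx A -> A != 0 ->
  exists (u : 'rV[R]_n) (rho : R), [/\ 0 < rho, nonneg_mx u, sqnorm u = 1,
    u *m A = rho *: u & forall l, eigenvalue A l -> `|l| <= rho].
Proof.
move=> sA nA A_neq0.
have [i [j Aij_gt0]] : exists i j, 0 < A i j.
  apply: contrapT => no_pos; move/eqP: A_neq0; apply; apply/matrixP => i j.
  rewrite mxE; apply/eqP; rewrite eq_le nA andbT leNgt.
  by apply/negP => Aij_gt0; apply: no_pos; exists i, j.
have [x [x1 x_max]] := sphere_max i (@bform_continuous n A).
set rho := bform A x x.
have rayleigh : forall y, bform A y y <= rho * sqnorm y := rayleigh_bound x_max.
set u := map_mx Num.norm x.
have u1 : sqnorm u = 1 by rewrite sqnorm_abs.
have uu : bform A u u = rho.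
  apply/le_anti/andP; split; first by have := rayleigh u; rewrite u1 mulr1.
  exact: le_trans (ler_norm _) (bform_abs _ nA).
have uA : u *m A = rho *: u.
  have deficit_psd y : 0 <= bform (rho%:M - A) y y.
    by rewrite bform_scalar_sub subr_ge0; exact: rayleigh.
  have deficit_sym : (rho%:M - A)^T = rho%:M - A.
    by rewrite linearB /= tr_scalar_mx sA.
  have deficit_u : bform (rho%:M - A) u u = 0.
    by rewrite bform_scalar_sub u1 uu mulr1 subrr.
  move: (psd_isotropic_kernel deficit_sym deficit_psd deficit_u) => /eqP.
  by rewrite mulmxBr mul_mx_scalar subr_eq0 => /eqP.
have rho_gt0 : 0 < rho.
  have := rayleigh (const_mx 1); have := bform_const1_gt0 nA Aij_gt0.
  have := sqnorm_ge0 (const_mx 1 : 'rV[R]_n); nra.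
exists u, rho; split => //; first by move=> k l; rewrite mxE normr_ge0.
by move=> l; apply: eigenvalue_norm_le => // y; rewrite mulrC; exact: rayleigh.
Qed.

Lemma perron_vec_exists n (A : 'M[R]_n) : SNN A -> A != 0 ->
  exists (c : 'cV[R]_n) (rho : R),
    [/\ perron_vec A c, 0 < rho, A *m c = rho *: c & c^T *m c = 1%:M].
Proof.
move=> [sA nA] A_neq0.
have [u [rho [rho_gt0 nu u1 uA rho_max]]] := perron_eigenvector sA nA A_neq0.
have Ac : A *m u^T = rho *: u^T by rewrite -{1}sA -trmx_mul uA linearZ.
exists u^T, rho; split => //; last by rewrite trmxK [LHS]mx11_scalar -sqnormE u1.
split; first by move=> i j; rewrite mxE.
split; first by rewrite -u1; apply: eq_bigr => i _; rewrite mxE.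
exists rho; split => //; split => //; apply/eigenvalueP; exists u => //.
by apply/eqP => u0; move: u1; rewrite u0 sqnorm0 => /esym/eqP; rewrite oner_eq0.
Qed.

End PerronVector.

Section SNTFactorizations.
Variable R : realType.

Lemma nonneg_mul p q k (M : 'M[R]_(p, q)) (N : 'M[R]_(q, k)) :
  nonneg_mx M -> nonneg_mx N -> nonneg_mx (M *m N).
Proof. by move=> nM nN i j; rewrite mxE; apply: sumr_ge0 => l _; apply: mulr_ge0. Qed.

Lemma nonneg_tr p q (M : 'M[R]_(p, q)) : nonneg_mx M -> nonneg_mx M^T.
Proof. by move=> nM i j; rewrite mxE. Qed.

Lemma rank_le_snt_fact n (X : 'M[R]_n) m : snt_fact X m -> (\rank X <= m)%N.
Proof.
move=> [B [C [_ [_ ->]]]].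
apply: leq_trans (mxrankM_maxl _ _) _; apply: leq_trans (mxrankM_maxl _ _) _.
exact: rank_leq_col.
Qed.

Lemma in_E_of_snt_fact n (X : 'M[R]_n) m :
  snt_fact X m -> (m <= \rank X)%N -> in_E X.
Proof.
move=> fX m_le; have rkX : \rank X = m.
  by apply/eqP; rewrite eqn_leq m_le rank_le_snt_fact.
have [B [C [nB [[sC nC] eX]]]] := fX.
split; last by rewrite rkX; split=> // k /rank_le_snt_fact; rewrite rkX.
split; first by rewrite eX !trmx_mul trmxK sC mulmxA.
by rewrite eX; apply: nonneg_mul; [apply: nonneg_mul | apply: nonneg_tr].
Qed.

(* Removing alpha c c^T, for a unit eigenvector c of A with eigenvalue
   rho != alpha, does not lower the rank: A is the deflated matrix times the
   invertible factor I + alpha/(rho - alpha) c c^T. *)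
Lemma rank_deflation n (A : 'M[R]_n) (c : 'cV[R]_n) rho alpha :
  A *m c = rho *: c -> c^T *m c = 1%:M -> alpha != rho ->
  (\rank A <= \rank (A - alpha *: (c *m c^T))%R)%N.
Proof.
move=> Ac cc1 alpha_neq; set D := A - alpha *: (c *m c^T).
have Dc : D *m (c *m c^T) = (rho - alpha) *: (c *m c^T).
  rewrite /D mulmxBl -scalemxAl !mulmxA Ac -scalemxAl.
  by rewrite -(mulmxA c (c^T) c) cc1 mulmx1 scalerBl.
have rho_alpha : rho - alpha != 0 by rewrite subr_eq0 eq_sym.
have -> : A = D *m (1%:M + (alpha / (rho - alpha)) *: (c *m c^T)).
  by rewrite mulmxDr mulmx1 -scalemxAr Dc scalerA mulfVK // subrK.
exact: mxrankM_maxl.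
Qed.

Lemma not_in_bdE_of_deflation n (A : 'M[R]_n) (c : 'cV[R]_n) rho alpha :
  perron_vec A c -> A *m c = rho *: c -> c^T *m c = 1%:M ->
  0 < alpha -> alpha != rho ->
  snt_fact (A - alpha *: (c *m c^T)) (\rank A) -> ~ in_bdE A.
Proof.
move=> pc Ac cc1 alpha_gt0 alpha_neq fact [_ bd].
apply: (bd c pc alpha alpha_gt0); apply: (in_E_of_snt_fact fact).
exact: rank_deflation Ac cc1 alpha_neq.
Qed.

End SNTFactorizations.

Section PositivePerturbation.
Variable R : realType.

Lemma finite_pos_lower_bound (I : finType) (f : I -> R) :
  (forall i, 0 < f i) -> exists2 e, 0 < e & forall i, e <= f i.
Proof.
move=> f_gt0; set S := \sum_i (f i)^-1.
have S_ge0 : 0 <= S by apply: sumr_ge0 => i _; rewrite invr_ge0 ltW.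
exists (1 / (1 + S)); first by rewrite divr_gt0 //; lra.
move=> i; rewrite ler_pdivrMr; last by lra.
have fi_inv : f i * (f i)^-1 = 1 by rewrite mulfV // gt_eqF.
have : (f i)^-1 <= S.
  by rewrite /S (bigD1 i) //= lerDl; apply: sumr_ge0 => j _; rewrite invr_ge0 ltW.
have := f_gt0 i; nra.
Qed.

Lemma pos_mx_perturb p q (M N : 'M[R]_(p, q)) : pos_mx M ->
  exists2 e, 0 < e & forall s, 0 <= s <= e -> nonneg_mx (M - s *: N).
Proof.
move=> pM; have [e e_gt0 e_le] := finite_pos_lower_bound
  (f := fun ij : 'I_p * 'I_q => M ij.1 ij.2 / (1 + `|N ij.1 ij.2|))
  (fun ij => divr_gt0 (pM _ _) (ltr_wpDr (normr_ge0 _) ltr01)).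
exists e => // s /andP[s_ge0 s_le_e] i j; rewrite !mxE.
have := e_le (i, j); rewrite /= ler_pdivlMr ?ltr_wpDr //.
have := ler_norm (N i j); have := normr_ge0 (N i j); nra.
Qed.

End PositivePerturbation.

Lemma congruence_shift (R : comPzRingType) n r (B X : 'M[R]_(n, r)) (C : 'M[R]_r) s :
  (B - s *: X) *m C *m (B - s *: X)^T = B *m C *m B^T - s *: (B *m C *m X^T)
     - s *: (X *m C *m B^T) + s ^+ 2 *: (X *m C *m X^T).
Proof.
have -> : (B - s *: X)^T = B^T - s *: X^T by rewrite linearB linearZ.
rewrite !mulmxBl !mulmxBr -!scalemxAl -!scalemxAr scalerA -expr2.
by rewrite opprB addrA addrAC.
Qed.

Section PositiveDeflation.
Variables (R : realType) (n r : nat) (A : 'M[R]_n).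
Variables (B : 'M[R]_(n, r)) (C : 'M[R]_r) (c : 'cV[R]_n) (rho : R).
Hypotheses (nB : nonneg_mx B) (nC : nonneg_mx C) (sC : C^T = C).
Hypothesis eA : A = B *m C *m B^T.
Hypotheses (rho_gt0 : 0 < rho) (Ac : A *m c = rho *: c).

Let y := rho^-1 *: (B^T *m c).

Let BCy : B *m C *m y = c.
Proof.
by rewrite /y -scalemxAr mulmxA -eA Ac scalerA mulVf ?scale1r // gt_eqF.
Qed.

(* If B > 0, then B - s c y^T is still nonnegative for small s > 0 and
   factors A - (2 s - s^2 y^T C y) c c^T. *)
Lemma deflation_pos_factor : pos_mx B ->
  exists2 alpha, 0 < alpha < rho & snt_fact (A - alpha *: (c *m c^T)) r.
Proof.
move=> pB; set X := c *m y^T; set gam := (y^T *m C *m y) 0 0.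
have [e e_gt0 e_nonneg] := pos_mx_perturb X pB.
set s := Num.min e (Num.min (rho / 4) (1 + `|gam|)^-1).
have gam1_gt0 : 0 < 1 + `|gam| by rewrite ltr_wpDr.
have s_gt0 : 0 < s by rewrite !lt_min e_gt0 divr_gt0 //= invr_gt0.
have s_le_e : s <= e by rewrite ge_min lexx.
have s_le_rho : s <= rho / 4 by rewrite !ge_min lexx orbT.
have s_gam : s * (1 + `|gam|) <= 1.
  by rewrite -ler_pdivlMr // div1r !ge_min lexx !orbT.
have := ler_norm gam; have := lerNnormlW (lexx `|gam|) => gam_ge gam_le.
exists (2 * s - s ^+ 2 * gam); first by apply/andP; split; nra.
exists (B - s *: X), C; split; first by apply: e_nonneg; rewrite ltW.
split=> //; rewrite congruence_shift -eA.
have BCX : B *m C *m X^T = c *m c^T by rewrite /X trmx_mul trmxK mulmxA BCy.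
have XCB : X *m C *m B^T = c *m c^T.
  have yCB : y^T *m (C *m B^T) = c^T by rewrite -BCy !trmx_mul sC.
  by rewrite /X -!mulmxA yCB.
have XCX : X *m C *m X^T = gam *: (c *m c^T).
  have -> : X *m C *m X^T = c *m (y^T *m C *m y) *m c^T.
    by rewrite /X trmx_mul trmxK !mulmxA.
  by rewrite [y^T *m C *m y]mx11_scalar mul_mx_scalar -scalemxAl.
rewrite BCX XCB XCX scalerA.
by apply/matrixP => i j; rewrite !mxE; ring.
Qed.

(* If C > 0, then with w = C y (so that B w = c), C - alpha w w^T is still
   nonnegative for small alpha > 0 and B (C - alpha w w^T) B^T = A - alpha c c^T. *)
Lemma deflation_pos_core : pos_mx C ->
  exists2 alpha, 0 < alpha < rho & snt_fact (A - alpha *: (c *m c^T)) r.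
Proof.
move=> pC; set w := C *m y.
have Bw : B *m w = c by rewrite /w mulmxA BCy.
have [e e_gt0 e_nonneg] := pos_mx_perturb (w *m w^T) pC.
set alpha := Num.min e (rho / 2).
have alpha_gt0 : 0 < alpha by rewrite lt_min e_gt0 divr_gt0.
have alpha_le_e : alpha <= e by rewrite ge_min lexx.
have alpha_lt_rho : alpha < rho.
  apply: le_lt_trans (_ : rho / 2 < rho); first by rewrite ge_min lexx orbT.
  by rewrite ltr_pdivrMr // mulr_natr mulr2n ltrDl.
exists alpha; first by rewrite alpha_gt0.
exists B, (C - alpha *: (w *m w^T)); split=> //; split.
  split; last by apply: e_nonneg; rewrite ltW.
  by rewrite linearB linearZ /= trmx_mul trmxK sC.
by rewrite mulmxBr mulmxBl -scalemxAr -scalemxAl -eA -Bw trmx_mul !mulmxA.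
Qed.

End PositiveDeflation.

Theorem mainTheorem12 (R : realType) (n r : nat) (A : 'M[R]_n)
  (B : 'M[R]_(n, r)) (C : 'M[R]_r) :
  (0 < r)%N ->
  SNN A -> \rank A = r -> is_st_plus A r ->
  nonneg_mx B -> nonneg_mx C -> C^T = C ->
  A = B *m C *m B^T ->
  pos_mx B \/ pos_mx C ->
  ~ in_bdE A.
Proof.
move=> r_gt0 SNN_A rkA _ nB nC sC eA pos_BC.
have A_neq0 : A != 0 by apply: contraTneq r_gt0 => A0; rewrite -rkA A0 mxrank0.
have [c [rho [pc rho_gt0 Ac cc1]]] := perron_vec_exists SNN_A A_neq0.
have [alpha /andP[alpha_gt0 alpha_lt_rho]] :
    exists2 alpha, 0 < alpha < rho & snt_fact (A - alpha *: (c *m c^T)) r.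
  case: pos_BC; first exact: deflation_pos_factor nC sC eA rho_gt0 Ac.
  exact: deflation_pos_core nB sC eA rho_gt0 Ac.
rewrite -rkA; apply: not_in_bdE_of_deflation pc Ac cc1 alpha_gt0 _.
by rewrite lt_eqF.
Qed.
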